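(* Let $G=(V,E)$ be a finite undirected graph and $k\in\mathbb{N}$. For $v\in V$ let $N[v]=\{v\}\cup\{v'\in V:\{v,v'\}\in E\}$, let $L_v=(V^*vv)^\omega\cup(V^*(V\setminus N[v]))^\omega\subseteq V^\omega$, and $L_G=\bigcap_{v\in V}L_v$. If $G$ is $k$-colourable, then there exists a complete deterministic generalised Büchi automaton over the input alphabet $V$ with $k$ states recognising $L_G$.
   Context: A finite undirected graph is $G=(V,E)$ with $V$ finite and $E$ a set of 2-element subsets of $V$. A $k$-colouring is a map $c:V\to\{1,\dots,k\}$ with $c(v)\ne c(v')$ whenever $\{v,v'\}\in E$; $G$ is $k$-colourable if one exists. For a set $X$, $(X^*Y)^\omega$ denotes infinite concatenations of words of $X^*Y$. An automaton is a tuple $(Q,\Sigma,q_{\mathrm{init}},\Delta,\Gamma,\mathrm{col},W)$ with finite state set, finite input alphabet $\Sigma$, initial state, transitions $\Delta\subseteq Q\times\Sigma\times Q$, output alphabet $\Gamma$, labelling $\mathrm{col}:\Delta\to\Gamma$, acceptance condition $W\subseteq\Gamma^\omega$. A run on $w=a_1a_2\cdots$ is a sequence $(q_0,a_1,q_1)(q_1,a_2,q_2)\cdots$ of transitions with $q_0=q_{\mathrm{init}}$, accepting if its label sequence is in $W$; the recognised language is the set of words with an accepting run. A generalised Büchi automaton with finite output colour set $C$ has $\Gamma=2^C$ and $W=\{x : \text{every } c\in C \text{ occurs in infinitely many letters of } x\}$. Deterministic (resp. complete): for every $(p,a)\in Q\times\Sigma$ there is at most (resp. at least) one $q$ with $(p,a,q)\in\Delta$.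 *)

From mathcomp Require Import all_boot.
Set Implicit Arguments. Unset Strict Implicit. Unset Printing Implicit Defensive.

(* A finite undirected (simple) graph: vertex finType V, symmetric irreflexive
   adjacency relation e ({v,v'} \in E  <->  e v v'). *)
Definition simple_graph (V : finType) (e : rel V) : Prop :=
  symmetric e /\ irreflexive e.

(* k-colouring: colours {1..k} represented by 'I_k. *)
Definition colourable (V : finType) (e : rel V) (k : nat) : Prop :=
  exists c : V -> 'I_k, forall v v', e v v' -> c v <> c v'.

Definition oword (V : Type) := nat -> V.

(* the finite factor w_a ... w_{b-1} *)
Definition segment (V : Type) (w : oword V) (a b : nat) : seq V :=
  [seq w i | i <- iota a (b - a)].

(* X^* Y, with X a set of letters and Y a set of finite words *)
Definition starcat (V : Type) (X : V -> Prop) (Y : seq V -> Prop) (u : seq V) :=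
  exists xs y, (forall i, i < size xs -> forall x0, X (nth x0 xs i)) /\ Y y /\ u = xs ++ y.

(* Z^omega for a set Z of finite words: infinite concatenations of words of Z *)
Definition omega_iter (V : Type) (Z : seq V -> Prop) (w : oword V) : Prop :=
  exists f : nat -> nat, f 0 = 0 /\
    forall n, f n < f n.+1 /\ Z (segment w (f n) (f n.+1)).

Definition closed_nbhd (V : finType) (e : rel V) (v : V) : {set V} :=
  v |: [set v' | e v v'].

Definition L_v (V : finType) (e : rel V) (v : V) (w : oword V) : Prop :=
  omega_iter (starcat (fun _ => True) (fun y => y = [:: v; v])) w \/
  omega_iter (starcat (fun _ => True)
                (fun y => exists x, y = [:: x] /\ x \notin closed_nbhd e v)) w.

Definition L_G (V : finType) (e : rel V) (w : oword V) : Prop :=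
  forall v, L_v e v w.

(* Generalised Büchi automaton with input alphabet V: state set Q, finite output
   colour set C (output alphabet {set C} = 2^C), initial state, transition
   relation Delta, labelling col (only relevant on transitions in Delta). *)
Record gba (V : finType) := GBA {
  gba_Q : finType;
  gba_C : finType;
  gba_init : gba_Q;
  gba_delta : gba_Q -> V -> gba_Q -> bool;
  gba_col : gba_Q -> V -> gba_Q -> {set gba_C}
}.
Arguments gba_init {V} g.
Arguments gba_delta {V} g _ _ _.
Arguments gba_col {V} g _ _ _.

Definition gba_deterministic (V : finType) (A : gba V) : Prop :=
  forall p a q q', gba_delta A p a q -> gba_delta A p a q' -> q = q'.

Definition gba_complete (V : finType) (A : gba V) : Prop :=
  forall p a, exists q, gba_delta A p a q.

Definition gba_run (V : finType) (A : gba V) (w : oword V) (r : nat -> gba_Q A) :=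
  r 0 = gba_init A /\ forall i, gba_delta A (r i) (w i) (r i.+1).

Arguments gba_run {V} A w r.

Definition gba_accepting_run (V : finType) (A : gba V) (w : oword V)
    (r : nat -> gba_Q A) : Prop :=
  gba_run A w r /\
  forall c : gba_C A, forall N, exists i, N <= i /\ c \in gba_col A (r i) (w i) (r i.+1).

Arguments gba_accepting_run {V} A w r.

Definition gba_accepts (V : finType) (A : gba V) (w : oword V) : Prop :=
  exists r, gba_accepting_run A w r.

From mathcomp Require Import all_boot zify.
From Stdlib Require Import Classical ClassicalEpsilon.

Set Implicit Arguments.
Unset Strict Implicit.
Unset Printing Implicit Defensive.

(* Fix a proper colouring c.  The automaton has the k colours as states and
   moves to the colour of the letter just read; reading a in state p it emits
   every v with either p = c v and a = v, or a outside N[v].  If w leaves N[v]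
   infinitely often, then w is in L_v and v is emitted infinitely often.
   Otherwise, since inside N[v] only v itself has colour c v, v is emitted
   infinitely often exactly when the factor vv occurs infinitely often. *)

Definition inf_often (P : nat -> Prop) : Prop := forall N, exists i, N <= i /\ P i.

Lemma inf_often_mono (P Q : nat -> Prop) :
  (forall i, P i -> Q i) -> inf_often P -> inf_often Q.
Proof. by move=> PQ hP N; have [i [hi /PQ]] := hP N; exists i. Qed.

Lemma inf_oftenS (P : nat -> Prop) : inf_often (fun i => P i.+1) <-> inf_often P.
Proof.
split=> hP N.
- by have [i [hi Pi]] := hP N; exists i.+1; split; first lia.
- have [[|i] [hi Pi]] := hP N.+1; first by [].
  by exists i; split; first lia.
Qed.

Lemma inf_often_or (P Q : nat -> Prop) :
  inf_often (fun i => P i \/ Q i) -> inf_often P \/ inf_often Q.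
Proof.
move=> hPQ; apply: NNPP => /not_or_and [nP nQ].
have [NP hNP] := not_all_ex_not _ _ nP; have [NQ hNQ] := not_all_ex_not _ _ nQ.
have [i [hi [Pi|Qi]]] := hPQ (maxn NP NQ).
- by apply: hNP; exists i; split; first lia.
- by apply: hNQ; exists i; split; first lia.
Qed.

Section Segments.

Variables (V : Type) (w : oword V).

Lemma size_segment a b : size (segment w a b) = b - a.
Proof. by rewrite /segment size_map size_iota. Qed.

Lemma segment_cat a c b : a <= c <= b ->
  segment w a b = segment w a c ++ segment w c b.
Proof.
move=> /andP [hac hcb]; rewrite /segment -map_cat.
have -> : b - a = (c - a) + (b - c) by lia.
by rewrite iotaD; congr (map _ (_ ++ iota _ _)); lia.
Qed.

Lemma drop_segment n a b : drop n (segment w a b) = segment w (a + n) b.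
Proof. by rewrite /segment -map_drop drop_iota; congr (map _ (iota _ _)); lia. Qed.

Variables (Y : seq V -> Prop) (m : nat).
Hypothesis size_Y : forall y, Y y -> size y = m.
Hypothesis m_gt0 : 0 < m.

Lemma starcat_segment a b :
  starcat (fun _ => True) Y (segment w a b) <-> a + m <= b /\ Y (segment w (b - m) b).
Proof.
split.
- move=> [xs [y [_ [Yy seg_eq]]]].
  have := f_equal size seg_eq; rewrite size_segment size_cat (size_Y Yy) => hsize.
  split; first lia.
  have := f_equal (drop (size xs)) seg_eq.
  have -> : b - m = a + size xs by lia.
  by rewrite drop_size_cat // drop_segment => ->.
- move=> [hab Yy]; exists (segment w a (b - m)), (segment w (b - m) b).
  by split=> //; split=> //; apply: segment_cat; lia.
Qed.

Lemma omega_iter_starcat :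
  omega_iter (starcat (fun _ => True) Y) w <->
  inf_often (fun i => Y (segment w i (i + m))).
Proof.
split.
- move=> [f [f0 hf]].
  have f_ge : forall n, n <= f n.
    by elim=> [|n IH] //; have [hlt _] := hf n; lia.
  move=> N; have [_ /starcat_segment [hle Yy]] := hf (N + m).
  exists (f (N + m).+1 - m); split; first by have := f_ge (N + m); lia.
  by rewrite subnK //; lia.
- move=> hY.
  have [g hg] := ClassicalEpsilon.choice _ hY.
  exists (fun n => iter n (fun x => g x + m) 0); split=> // n.
  rewrite iterS; set x := iter n _ _.
  have [hx Yx] := hg x; split; first lia.
  by apply/starcat_segment; rewrite addnK; split; first lia.
Qed.

End Segments.

Section Neighbourhood.

Variables (V : finType) (e : rel V) (w : oword V) (v : V).

Lemma omega_iter_pair :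
  omega_iter (starcat (fun _ => True) (fun y => y = [:: v; v])) w <->
  inf_often (fun i => w i = v /\ w i.+1 = v).
Proof.
rewrite (@omega_iter_starcat _ w _ 2) //; last by move=> y ->.
by rewrite /segment; split; apply: inf_often_mono => i; rewrite addKn /=; case=> -> ->.
Qed.

Lemma omega_iter_outside (S : {set V}) :
  omega_iter (starcat (fun _ => True) (fun y => exists x, y = [:: x] /\ x \notin S)) w <->
  inf_often (fun i => w i \notin S).
Proof.
rewrite (@omega_iter_starcat _ w _ 1) //; last by move=> y [x [-> _]].
rewrite /segment; split; apply: inf_often_mono => i; rewrite addKn /=.
- by case=> x [[->]].
- by exists (w i).
Qed.

Lemma L_vE : L_v e v w <->
  inf_often (fun i => w i = v /\ w i.+1 = v) \/
  inf_often (fun i => w i \notin closed_nbhd e v).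
Proof. by rewrite /L_v omega_iter_pair omega_iter_outside. Qed.

End Neighbourhood.

Section ColourAutomaton.

Variables (V : finType) (e : rel V) (k : nat) (c : V -> 'I_k) (q0 : 'I_k).
Hypothesis proper_c : forall v v', e v v' -> c v <> c v'.

Definition colour_gba : gba V :=
  @GBA V 'I_k V q0 (fun _ a q => q == c a)
    (fun p a _ => [set v | (p == c v) && (a == v) || (a \notin closed_nbhd e v)]).

Lemma colour_gba_deterministic : gba_deterministic colour_gba.
Proof. by move=> p a q q' /eqP -> /eqP ->. Qed.

Lemma colour_gba_complete : gba_complete colour_gba.
Proof. by move=> p a; exists (c a) => /=. Qed.

Definition colour_run (w : oword V) (i : nat) : 'I_k :=
  if i is j.+1 then c (w j) else q0.

Lemma colour_run_run w : gba_run colour_gba w (colour_run w).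
Proof. by split=> // i /=. Qed.

Lemma gba_run_colour w r : gba_run colour_gba w r -> forall i, r i.+1 = c (w i).
Proof. by move=> [_ hr] i; apply/eqP; exact: hr. Qed.

Lemma colour_gba_emits_pair (w : oword V) v i :
  v \in gba_col colour_gba (c (w i)) (w i.+1) (c (w i.+1)) ->
  (w i = v /\ w i.+1 = v) \/
  (w i \notin closed_nbhd e v \/ w i.+1 \notin closed_nbhd e v).
Proof.
rewrite inE => /orP [/andP [/eqP c_wi /eqP wi1]|]; last by right; right.
have [nbhd_wi|] := boolP (w i \in closed_nbhd e v); last by right; left.
left; split=> //; move: nbhd_wi; rewrite !inE => /orP [/eqP //|e_vwi].
by case: (proper_c e_vwi); rewrite c_wi.
Qed.

Lemma colour_gba_emits_inf_often w r v : gba_run colour_gba w r ->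
  inf_often (fun i => v \in gba_col colour_gba (r i) (w i) (r i.+1)) <-> L_v e v w.
Proof.
move=> run_r; have r_next := gba_run_colour run_r.
rewrite L_vE; split.
- rewrite -inf_oftenS => emits.
  have : inf_often (fun i => (w i = v /\ w i.+1 = v) \/
           (w i \notin closed_nbhd e v \/ w i.+1 \notin closed_nbhd e v)).
    by apply: inf_often_mono emits => i; rewrite !r_next; exact: colour_gba_emits_pair.
  case/inf_often_or=> [vv|/inf_often_or [out|out]];
    [by left|by right|by right; apply/inf_oftenS].
- case=> [vv|out].
  + apply/inf_oftenS; apply: inf_often_mono vv => i [wi wi1].
    by rewrite inE !r_next wi wi1 !eqxx.
  + by apply: inf_often_mono out => i out_i; rewrite inE out_i orbT.
Qed.

Lemma colour_gba_accepts w : gba_accepts colour_gba w <-> L_G e w.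
Proof.
split.
- move=> [r [run_r acc]] v; exact/(colour_gba_emits_inf_often v run_r).
- move=> hL; exists (colour_run w); split; first exact: colour_run_run.
  move=> v; exact/(colour_gba_emits_inf_often v (colour_run_run w)).
Qed.

End ColourAutomaton.

Theorem lemma34 (V : finType) (e : rel V) (k : nat) :
  simple_graph e -> 0 < k -> colourable e k ->
  exists A : gba V,
    #|gba_Q A| = k /\ gba_deterministic A /\ gba_complete A /\
    forall w : oword V, gba_accepts A w <-> L_G e w.
Proof.
move=> _ k_gt0 [c proper_c].
exists (colour_gba e c (Ordinal k_gt0)); split; first exact: card_ord.
split; first exact: colour_gba_deterministic.
split; first exact: colour_gba_complete.
exact: colour_gba_accepts.
Qed.
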